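(* Let $\mathbb{K}\in\{\mathbb{R},\mathbb{C}\}$. Let $S_1,\dots,S_M$ be non-trivial, independent linear subspaces of $\mathbb{K}^m$ with dimensions $d_1,\dots,d_M$, $d_{\max}=\max_i d_i$, and $\mathcal{U}=\bigcup_{i=1}^M S_i$. Let $\mathbf{W}=[w_1\cdots w_n]\in\mathbb{K}^{m\times n}$ be a rank $r$ matrix whose columns are drawn from $\mathcal{U}$, such that the columns drawn from each $S_i$ form a generic set for $S_i$. Factor $\mathbf{W}=\mathbf{W}\mathbf{W}^\dagger\mathbf{W}$ and let $Q$ be either $\mathrm{bin}(\mathbf{W}^\dagger\mathbf{W})$ or $\mathrm{abs}(\mathbf{W}^\dagger\mathbf{W})$. Then $\Xi_{\mathbf{W}}=Q^{d_{\max}}$ is a similarity matrix for $\mathbf{W}$. Moreover, if $\mathbf{W}=U_r\Sigma_rV_r^*$ is the skinny singular value decomposition of $\mathbf{W}$, then $\mathbf{W}^\dagger\mathbf{W}=V_rV_r^*$.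
   Context: Subspaces are independent if $\dim(S_1+\dots+S_M)=\sum_i\dim S_i\le m$. Data drawn from a $d$-dimensional subspace $S$ is generic if it has more than $d$ elements and any $d$ of them form a basis of $S$. $\mathrm{abs}(A)(i,j)=|A(i,j)|$; $\mathrm{bin}(A)(i,j)=1$ if $A(i,j)\ne0$, else $0$. A similarity matrix for $\mathbf{W}$ is a symmetric matrix $\Xi$ with $\Xi(i,j)\neq0$ iff $w_i,w_j$ come from the same subspace $S_l$. The skinny SVD of a rank $r$ matrix is $U_r\Sigma_rV_r^*$ with $U_r$, $V_r$ the first $r$ left/right singular vectors and $\Sigma_r=\mathrm{diag}(\sigma_1,\dots,\sigma_r)$. $\dagger$ denotes the Moore--Penrose pseudoinverse. *)

(* K ranges over the reals (a realType R) and the complex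
   numbers R[i] (mathcomp-real-closed's complex R). *)
From HB Require Import structures.
From mathcomp Require Import all_boot all_order all_algebra.
From mathcomp Require Import reals complex.
Set Implicit Arguments. Unset Strict Implicit. Unset Printing Implicit Defensive.
Import Order.TTheory GRing.Theory Num.Theory.
Local Open Scope ring_scope.

Section Defs.
Variable K : numFieldType.
(* the conjugation of K: identity on R, complex conjugation on C *)
Variable cj : K -> K.

Definition adjmx {p q} (A : 'M[K]_(p, q)) : 'M[K]_(q, p) := (map_mx cj A)^T.

Definition is_pinv {p q} (A : 'M[K]_(p, q)) (X : 'M[K]_(q, p)) : Prop :=
  [/\ A *m X *m A = A, X *m A *m X = X,
      adjmx (A *m X) = A *m X & adjmx (X *m A) = X *m A].

Definition absmx {p q} (A : 'M[K]_(p, q)) : 'M[K]_(p, q) :=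
  map_mx (fun x => `|x|) A.
Definition binmx {p q} (A : 'M[K]_(p, q)) : 'M[K]_(p, q) :=
  map_mx (fun x => (x != 0)%:R) A.

(* subspaces of K^m are represented by square matrices (their row space);
   the dimension of S is \rank S.  Column j of W is drawn from S: *)
Definition drawn_from {m n} (W : 'M[K]_(m, n)) (S : 'M[K]_m) (j : 'I_n) : bool :=
  ((col j W)^T <= S)%MS.

Definition colset {m n} (W : 'M[K]_(m, n)) (A : {set 'I_n}) : 'M[K]_(#|A|, m) :=
  \matrix_(k < #|A|, l < m) W l (enum_val k).

Definition is_basis_of {p m} (B : 'M[K]_(p, m)) (S : 'M[K]_m) : Prop :=
  row_free B /\ (B == S)%MS.

Definition generic_for {m n} (W : 'M[K]_(m, n)) (S : 'M[K]_m) (A : {set 'I_n}) : Prop :=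
  (\rank S < #|A|)%N /\
  (forall B : {set 'I_n}, B \subset A -> #|B| = \rank S -> is_basis_of (colset W B) S).

Definition similarity_matrix {m n M} (W : 'M[K]_(m, n)) (S : 'I_M -> 'M[K]_m)
    (Xi : 'M[K]_n) : Prop :=
  Xi^T = Xi /\
  (forall i j : 'I_n, Xi i j != 0 <->
     exists l : 'I_M, drawn_from W (S l) i /\ drawn_from W (S l) j).

Definition skinny_svd {m n r} (W : 'M[K]_(m, n)) (U : 'M[K]_(m, r))
    (sigma : 'rV[K]_r) (V : 'M[K]_(n, r)) : Prop :=
  [/\ adjmx U *m U = 1%:M, adjmx V *m V = 1%:M,
      (forall i : 'I_r, 0 < sigma 0 i),
      (forall i j : 'I_r, (i <= j)%N -> sigma 0 j <= sigma 0 i)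
    & W = U *m diag_mx sigma *m adjmx V].

Definition corollary4_prop : Prop :=
  forall (m n M r : nat) (S : 'I_M -> 'M[K]_m) (W : 'M[K]_(m, n))
         (X : 'M[K]_(n, m)),
  (forall i, 0 < \rank (S i))%N ->
  \rank (\sum_(i < M) S i)%MS = (\sum_(i < M) \rank (S i))%N ->
  \rank W = r ->
  (forall j : 'I_n, exists i : 'I_M, drawn_from W (S i) j) ->
  (forall i : 'I_M, generic_for W (S i) [set j | drawn_from W (S i) j]) ->
  is_pinv W X ->
  (forall Q : 'M[K]_n, Q = binmx (X *m W) \/ Q = absmx (X *m W) ->
     similarity_matrix W S (Q ^+ (\max_(i < M) \rank (S i))%N)) /\
  (forall (U : 'M[K]_(m, r)) (sigma : 'rV[K]_r) (V : 'M[K]_(n, r)),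
     skinny_svd W U sigma V -> X *m W = V *m adjmx V).

End Defs.

(* P := W^+ W is the orthogonal projection onto the row space of W, so for
   every set C of indices the rows of P and the columns of W indexed by C have
   the same rank.  Independence of the subspaces makes P commute with the
   coordinate projections onto the clusters, so P, and with it Q, is block
   diagonal along the clusters: entries of Q^t outside the blocks vanish.
   Inside a cluster A of dimension d, genericity gives
   rank (rows of P in C) >= min(|C|, d) for every C in A, while the rows of P
   in A have rank at most d; hence no nonempty proper subset of A is closed
   under the support of P, as it would split that rank into two parts with
   sum > d.  For i in A let L t be the support of row i of Q^t.  The diagonal
   of P does not vanish on A, so the L t increase, and as long as
   L t.+1 <> A the rank of the rows of P in L t strictly increases; thus
   L t = A for t >= d.  Finally Y := V Sigma^-1 U^* satisfies W Y W = W with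
   Y W Hermitian, and these two conditions determine W^+ W, so W^+ W = V V^*. *)
From HB Require Import structures.
From mathcomp Require Import all_boot all_order all_algebra.
From mathcomp Require Import reals complex.
From mathcomp Require Import zify.
Set Implicit Arguments. Unset Strict Implicit. Unset Printing Implicit Defensive.
Import Order.TTheory GRing.Theory Num.Theory.
Local Open Scope ring_scope.

Section Adjoint.
Variables (K : numFieldType) (cj : {rmorphism K -> K}).
Hypothesis cjK : involutive cj.
Local Notation adj := (adjmx cj).

Lemma adjmxM p q s (A : 'M[K]_(p, q)) (B : 'M[K]_(q, s)) :
  adj (A *m B) = adj B *m adj A.
Proof. by rewrite /adjmx map_mxM trmx_mul. Qed.

Lemma adjmxK p q : cancel (@adjmx _ cj p q) (@adjmx _ cj q p).
Proof. by move=> A; apply/matrixP=> i j; rewrite /adjmx !mxE cjK. Qed.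

Lemma adjmx_commute n (P D : 'M[K]_n) :
  adj P = P -> adj D = D -> P *m D *m P = P *m D -> P *m D = D *m P.
Proof.
move=> hP hD PDP; have : adj (P *m D) = adj (P *m D *m P) by rewrite PDP.
by rewrite !adjmxM hD hP mulmxA PDP => ->.
Qed.

Lemma pinv_proj_unique m n (W : 'M[K]_(m, n)) X Y :
  W *m X *m W = W -> W *m Y *m W = W ->
  adj (X *m W) = X *m W -> adj (Y *m W) = Y *m W -> X *m W = Y *m W.
Proof.
move=> WXW WYW hXW hYW.
have XW_YW : X *m W *m (Y *m W) = X *m W by rewrite -!mulmxA (mulmxA W) WYW.
have YW_XW : Y *m W *m (X *m W) = Y *m W by rewrite -!mulmxA (mulmxA W) WXW.
by rewrite -XW_YW -hXW -hYW -adjmxM YW_XW hYW.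
Qed.

Lemma pinv_skinny_svd m n r (W : 'M[K]_(m, n)) X U sigma (V : 'M_(n, r)) :
  is_pinv cj W X -> skinny_svd cj W U sigma V -> X *m W = V *m adj V.
Proof.
move=> [WXW _ _ hXW] [UU VV sigma_gt0 _ defW].
pose Y := V *m diag_mx (\row_i (sigma 0 i)^-1) *m adj U.
have YW : Y *m W = V *m adj V.
  rewrite defW /Y !mulmxA -(mulmxA _ (adj U)) UU mulmx1 -(mulmxA V) mulmx_diag.
  have -> : \row_i ((\row_j (sigma 0 j)^-1) 0 i * sigma 0 i) = const_mx 1.
    by apply/rowP=> i; rewrite !mxE mulVf ?gt_eqF.
  by rewrite diag_const_mx mulmx1.
rewrite -YW; apply: pinv_proj_unique WXW _ hXW _; last by rewrite YW adjmxM adjmxK.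
by rewrite -mulmxA YW {1}defW -!mulmxA (mulmxA (adj V)) VV mul1mx defW mulmxA.
Qed.

End Adjoint.

Section SelectionMatrix.
Variable R : pzRingType.

Definition sel_mx n (C : {set 'I_n}) : 'M[R]_n := diag_mx (\row_k (k \in C)%:R).

Variables (n : nat) (C : {set 'I_n}).

Lemma mul_sel_mxE p (A : 'M[R]_(n, p)) i j :
  (sel_mx C *m A) i j = if i \in C then A i j else 0.
Proof. by rewrite mul_diag_mx !mxE; case: ifP; rewrite ?mul1r ?mul0r. Qed.

Lemma mul_mx_selE p (A : 'M[R]_(p, n)) i j :
  (A *m sel_mx C) i j = if j \in C then A i j else 0.
Proof. by rewrite mul_mx_diag !mxE; case: ifP; rewrite ?mulr1 ?mulr0. Qed.

Lemma row_mul_sel_mx p (A : 'M[R]_(n, p)) i :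
  row i (sel_mx C *m A) = if i \in C then row i A else 0.
Proof. by apply/rowP=> j; rewrite mxE mul_sel_mxE; case: ifP; rewrite !mxE. Qed.

Lemma tr_sel_mx : (sel_mx C)^T = sel_mx C.
Proof. exact: tr_diag_mx. Qed.

End SelectionMatrix.

Arguments sel_mx {R n} C.

Lemma map_sel_mx (R S : pzRingType) (f : {rmorphism R -> S}) n (C : {set 'I_n}) :
  map_mx f (sel_mx C) = sel_mx C :> 'M[S]_n.
Proof. by rewrite map_diag_mx; congr diag_mx; apply/rowP=> k; rewrite !mxE rmorph_nat. Qed.

Lemma adjmx_sel_mx (K : numFieldType) (cj : {rmorphism K -> K}) n (C : {set 'I_n}) :
  adjmx cj (sel_mx C) = sel_mx C.
Proof. by rewrite /adjmx map_sel_mx tr_sel_mx. Qed.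

Section SelectionRowSpace.
Variables (F : fieldType) (n p : nat).
Implicit Types (C D : {set 'I_n}) (A : 'M[F]_(n, p)).

Lemma sel_mx_subset C D A : C \subset D -> (sel_mx C *m A <= sel_mx D *m A)%MS.
Proof.
move=> sCD; apply/row_subP=> i; rewrite row_mul_sel_mx.
case: ifP => [iC|_]; last exact: sub0mx.
by have := row_sub i (sel_mx D *m A); rewrite row_mul_sel_mx (subsetP sCD i iC).
Qed.

Lemma sel_mxU_sub C D A :
  (sel_mx (C :|: D) *m A <= sel_mx C *m A + sel_mx D *m A)%MS.
Proof.
apply/row_subP=> i; rewrite row_mul_sel_mx inE.
have [iC|_] /= := boolP (i \in C).
  apply: submx_trans (addsmxSl _ _).
  by have := row_sub i (sel_mx C *m A); rewrite row_mul_sel_mx iC.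
case: ifP => [iD|_]; last exact: sub0mx.
apply: submx_trans (addsmxSr _ _).
by have := row_sub i (sel_mx D *m A); rewrite row_mul_sel_mx iD.
Qed.

Lemma sel_mx1_mul_eq0 i A : row i A = 0 -> sel_mx [set i] *m A = 0.
Proof.
move=> Ai0; apply/row_matrixP=> k; rewrite row_mul_sel_mx row0 inE.
by case: eqP => [->|].
Qed.

End SelectionRowSpace.

Lemma eqmx_colset (K : numFieldType) m n (W : 'M[K]_(m, n)) (B : {set 'I_n}) :
  (colset W B :=: sel_mx B *m W^T)%MS.
Proof.
apply/eqmxP/andP; split; apply/row_subP.
- move=> k; have := row_sub (enum_val k) (sel_mx B *m W^T).
  by rewrite row_mul_sel_mx enum_valP; congr (_ <= _)%MS; apply/rowP=> l; rewrite !mxE.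
- move=> a; rewrite row_mul_sel_mx; case: ifP => [aB|_]; last exact: sub0mx.
  have := row_sub (enum_rank_in aB a) (colset W B).
  by congr (_ <= _)%MS; apply/rowP=> l; rewrite !mxE enum_rankK_in.
Qed.

Section PinvSelection.
Variables (K : numFieldType) (cj : {rmorphism K -> K}).
Variables (m n : nat) (W : 'M[K]_(m, n)) (X : 'M[K]_(n, m)).
Hypothesis W_pinv : is_pinv cj W X.

Lemma pinv_commute D :
  adjmx cj D = D -> (forall c : 'M_n, W *m c = 0 -> W *m D *m c = 0) ->
  X *m W *m D = D *m (X *m W).
Proof.
move: W_pinv => [WXW _ _ hXW] hD kerD; apply: (@adjmx_commute _ cj) => //.
have W_ker : W *m (X *m W - 1%:M) = 0 by rewrite mulmxBr mulmx1 mulmxA WXW subrr.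
apply/eqP; rewrite -subr_eq0 -{2}[X *m W *m D]mulmx1 -mulmxBr.
by rewrite -!mulmxA (mulmxA W) kerD ?mulmx0.
Qed.

(* The rows of X W are the conjugates of its columns, and X W has the same
   column dependencies as W since W = W (X W). *)
Lemma pinv_rank_sel C : \rank (sel_mx C *m (X *m W)) = \rank (sel_mx C *m W^T).
Proof.
move: W_pinv => [WXW _ _ hXW].
have XW_T : map_mx cj (X *m W) = (X *m W)^T by rewrite -[in RHS]hXW trmxK.
have W_T : W^T = (X *m W)^T *m W^T by rewrite -trmx_mul mulmxA WXW.
rewrite -(mxrank_map cj) map_mxM map_sel_mx XW_T; apply/eqP; rewrite eqn_leq.
rewrite {1}trmx_mul mulmxA mxrankM_maxl /=.
by rewrite {1}W_T mulmxA mxrankM_maxl.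
Qed.

End PinvSelection.

Definition support_closed (R : nmodType) n (A : 'M[R]_n) (C : {set 'I_n}) :=
  forall a b, a \in C -> A a b != 0 -> b \in C.

Lemma support_closed_eq (R : nmodType) n (P Q : 'M[R]_n) C :
  (forall a b, (Q a b != 0) = (P a b != 0)) -> support_closed P C -> support_closed Q C.
Proof. by move=> PQ P_closed a b; rewrite PQ; apply: P_closed. Qed.

Lemma commute_sel_closed (R : pzRingType) n (P : 'M[R]_n) C :
  P *m sel_mx C = sel_mx C *m P -> support_closed P C.
Proof.
move=> PC a b aC; apply: contraR => bC; have := congr1 (fun N : 'M_n => N a b) PC.
by rewrite mul_mx_selE mul_sel_mxE aC (negbTE bC) => <-.
Qed.

Section OrthogonalProjection.
Variables (K : numFieldType) (cj : {rmorphism K -> K}).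
Hypothesis cj_ge0 : forall x : K, 0 <= cj x * x.
Hypothesis cj_eq0 : forall x : K, cj x * x = 0 -> x = 0.
Variables (n : nat) (P : 'M[K]_n).
Hypotheses (P_idem : P *m P = P) (P_herm : adjmx cj P = P).

Lemma proj_conj a b : P b a = cj (P a b).
Proof. by rewrite -{1}P_herm !mxE. Qed.

Lemma proj_diag_neq0 a : row a P != 0 -> P a a != 0.
Proof.
have Paa_sum : P a a = \sum_k cj (P a k) * P a k.
  by rewrite -{1}P_idem mxE; apply: eq_bigr => l _; rewrite (proj_conj a l) mulrC.
apply: contra; rewrite Paa_sum => /eqP/psumr_eq0P Pa0.
by apply/eqP/rowP=> k; rewrite !mxE; apply/cj_eq0/Pa0.
Qed.

(* The rows of P indexed by a closed set C are supported in C, those indexed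
   by D are supported outside C. *)
Lemma closed_sel_mx_cap0 (C D : {set 'I_n}) :
  support_closed P C -> [disjoint C & D] -> (sel_mx C *m P :&: sel_mx D *m P = 0)%MS.
Proof.
move=> C_closed CD.
have CPC : sel_mx C *m P *m sel_mx C = sel_mx C *m P.
  apply/matrixP=> a b; rewrite mul_mx_selE mul_sel_mxE.
  case: ifP => bC; case: ifP => // aC.
  by rewrite (contraNeq (C_closed a b aC) (negbT bC)).
have DPC : sel_mx D *m P *m sel_mx C = 0.
  apply/matrixP=> a b; rewrite mul_mx_selE mul_sel_mxE mxE.
  case: ifP => // bC; case: ifP => // aD.
  have Pba : P b a = 0.
    by apply: contraTeq aD => /(C_closed b a bC) aC; rewrite (disjointFr CD aC).
  by rewrite (proj_conj b a) Pba rmorph0.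
set v := (_ :&: _)%MS.
have /submxP [x vx] : (v <= sel_mx C *m P)%MS := capmxSl _ _.
have /submxP [y vy] : (v <= sel_mx D *m P)%MS := capmxSr _ _.
have vC : v *m sel_mx C = v by rewrite vx -mulmxA CPC.
by rewrite -vC vy -mulmxA DPC mulmx0.
Qed.

End OrthogonalProjection.

Section NonnegativePowers.
Variables (R : numDomainType) (n : nat) (Q : 'M[R]_n).
Hypothesis Q_ge0 : forall a b, 0 <= Q a b.

Definition reach i t := [set b | (Q ^+ t) i b != 0].

Lemma exp_mx_ge0 t a b : 0 <= (Q ^+ t) a b.
Proof.
elim: t a b => [|t IHt] a b; first by rewrite expr0 mxE ler0n.
by rewrite exprSr -mulmxE mxE sumr_ge0 // => k _; rewrite mulr_ge0.
Qed.

Lemma reach0 i : reach i 0 = [set i].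
Proof.
apply/setP=> b; rewrite !inE expr0 mxE.
by have [|] := eqVneq i b; rewrite ?mulr1n ?mulr0n ?oner_eq0 ?eqxx.
Qed.

Lemma reachS i t b : (b \in reach i t.+1) = [exists a in reach i t, Q a b != 0].
Proof.
rewrite inE exprSr -mulmxE mxE psumr_eq0 => [|k _]; last by rewrite mulr_ge0 ?exp_mx_ge0.
rewrite -has_predC; apply/hasP/exists_inP => [[a _]|[a ra Qab]].
  by rewrite /= mulf_eq0 negb_or => /andP[ra Qab]; exists a; rewrite ?inE.
by move: ra; rewrite inE => ra; exists a; rewrite ?mem_index_enum //= mulf_eq0 negb_or ra.
Qed.

Lemma reach_sub i C t : support_closed Q C -> i \in C -> reach i t \subset C.
Proof.
move=> C_closed iC; elim: t => [|t IHt]; first by rewrite reach0 sub1set.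
apply/subsetP=> b; rewrite reachS => /exists_inP[a ra Qab].
exact: C_closed (subsetP IHt a ra) Qab.
Qed.

Lemma reach_subS i t : {in reach i t, forall a, Q a a != 0} -> reach i t \subset reach i t.+1.
Proof.
move=> Qdiag; apply/subsetP=> a ra; rewrite reachS.
by apply/exists_inP; exists a; rewrite ?Qdiag.
Qed.

End NonnegativePowers.

Lemma tr_exp_mx (R : comPzRingType) n (Q : 'M[R]_n) t : Q^T = Q -> (Q ^+ t)^T = Q ^+ t.
Proof.
move=> QT; elim: t => [|t IHt]; first by rewrite expr0 trmx1.
by rewrite exprSr -mulmxE trmx_mul IHt QT mulmxE -exprS exprSr.
Qed.

Section ConnectedBlock.
Variables (K : numFieldType) (cj : {rmorphism K -> K}).
Hypothesis cj_ge0 : forall x : K, 0 <= cj x * x.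
Hypothesis cj_eq0 : forall x : K, cj x * x = 0 -> x = 0.
Variables (n : nat) (P Q : 'M[K]_n) (A : {set 'I_n}) (d : nat).
Hypotheses (P_idem : P *m P = P) (P_herm : adjmx cj P = P).
Hypothesis Q_ge0 : forall a b, 0 <= Q a b.
Hypothesis Q_supp : forall a b, (Q a b != 0) = (P a b != 0).
Hypothesis A_closed : support_closed P A.
Hypothesis rank_ge :
  forall C : {set 'I_n}, C \subset A -> (minn #|C| d <= \rank (sel_mx C *m P))%N.
Hypothesis rank_le : (\rank (sel_mx A *m P) <= d)%N.
Hypotheses (d_gt0 : (0 < d)%N) (d_lt : (d < #|A|)%N).

Lemma block_diag_neq0 a : a \in A -> Q a a != 0.
Proof.
move=> aA; rewrite Q_supp; apply: proj_diag_neq0 => //.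
have := @rank_ge [set a]; rewrite sub1set => /(_ aA); apply: contraTneq => Pa0.
by rewrite sel_mx1_mul_eq0 // mxrank0 cards1 -ltnNge leq_min d_gt0.
Qed.

Lemma closed_subset_eq (C : {set 'I_n}) :
  C \subset A -> C != set0 -> support_closed P C -> C = A.
Proof.
move=> CA C_neq0 C_closed; apply/eqP; rewrite eqEsubset CA /=; apply: contraT => AC.
set D := A :\: C.
have CD : [disjoint C & D] by rewrite -setI_eq0 /D setDE setICA setICr setI0.
have rank_CD := mxrank_disjoint_sum (closed_sel_mx_cap0 P_herm C_closed CD).
have : (\rank (sel_mx C *m P + sel_mx D *m P) <= d)%N.
  by apply: leq_trans (mxrankS _) rank_le; rewrite addsmx_sub !sel_mx_subset ?subsetDl.
have := rank_ge CA; have := rank_ge (subsetDl A C).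
have : (0 < #|D|)%N by rewrite card_gt0 setD_eq0.
have : (0 < #|C|)%N by rewrite card_gt0.
have : (#|C| + #|D| = #|A|)%N by rewrite cardsDS // subnKC ?subset_leq_card.
rewrite rank_CD -/D; lia.
Qed.

Variable i : 'I_n.
Hypothesis iA : i \in A.

Let L := reach Q i.

Lemma reach_sub_block t : L t \subset A.
Proof. exact/reach_sub/iA/(support_closed_eq Q_supp). Qed.

Lemma reach_subS_block t : L t \subset L t.+1.
Proof. by apply: reach_subS => // a /(subsetP (reach_sub_block t)); apply: block_diag_neq0. Qed.

Lemma reach_self t : i \in L t.
Proof.
elim: t => [|t IHt]; first by rewrite /L reach0 set11.
exact: subsetP (reach_subS_block t) i IHt.
Qed.

(* Each row of P in L t.+1 is then a combination of rows in L t, all of which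
   vanish outside L t.+1. *)
Lemma reach_closed_of_sub t :
  (sel_mx (L t.+1) *m P <= sel_mx (L t) *m P)%MS -> support_closed P (L t.+1).
Proof.
move=> LSt y b yL; apply: contraNT => bL.
have Lb0 a : a \in L t -> P a b = 0.
  move=> aL; apply/eqP; apply: contraNT bL => Pab.
  by rewrite reachS //; apply/exists_inP; exists a; rewrite ?Q_supp.
have /submxP [g yg] : (row y P <= sel_mx (L t) *m P)%MS.
  apply: submx_trans LSt.
  by have := row_sub y (sel_mx (L t.+1) *m P); rewrite row_mul_sel_mx yL.
have -> : P y b = (g *m (sel_mx (L t) *m P)) 0 b by rewrite -yg mxE.
rewrite mxE; apply/eqP/big1 => a _; rewrite mul_sel_mxE.
by case: ifP => [/Lb0 ->|_]; rewrite mulr0.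
Qed.

Lemma reach_rank_ltnS t :
  L t.+1 != A -> (\rank (sel_mx (L t) *m P) < \rank (sel_mx (L t.+1) *m P))%N.
Proof.
move=> LA; have LtS := sel_mx_subset P (reach_subS_block t).
rewrite ltn_neqAle mxrankS // andbT; apply: contra LA => /eqP eq_rank.
apply/eqP/closed_subset_eq; first exact: reach_sub_block.
  by apply/set0Pn; exists i; apply: reach_self.
by apply: reach_closed_of_sub; rewrite -(mxrank_leqif_sup LtS).2 eq_rank.
Qed.

Lemma reach_block_eq t : (d <= t)%N -> L t = A.
Proof.
have grow s : L s = A \/ (s < \rank (sel_mx (L s) *m P))%N.
  elim: s => [|s [IHs|IHs]].
  - right; have := @rank_ge [set i]; rewrite sub1set /L reach0 cards1 => /(_ iA).
    by rewrite (minn_idPl d_gt0).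
  - by left; apply/eqP; rewrite eqEsubset reach_sub_block -{1}IHs reach_subS_block.
  - have [|LA] := eqVneq (L s.+1) A; [by left | right].
    exact: leq_ltn_trans IHs (reach_rank_ltnS LA).
move=> dt; have [//|t_lt] := grow t.
have := leq_trans (mxrankS (sel_mx_subset P (reach_sub_block t))) rank_le.
by rewrite leqNgt (leq_ltn_trans dt t_lt).
Qed.

End ConnectedBlock.

Lemma subset_of_card (T : finType) (A : {set T}) k :
  (k <= #|A|)%N -> exists2 B : {set T}, B \subset A & #|B| = k.
Proof.
case/card_geqP=> s [s_uniq s_size sA]; exists [set x in s].
  by apply/subsetP=> x; rewrite inE => /sA.
by rewrite cardsE (card_uniqP s_uniq).
Qed.

Lemma mxdirect_sum_eq0 (F : fieldType) (I : finType) m n (S : I -> 'M[F]_n)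
    (v : I -> 'M[F]_(m, n)) :
  mxdirect (\sum_i S i) -> (forall i, (v i <= S i)%MS) -> \sum_i v i = 0 ->
  forall i, v i = 0.
Proof.
move=> /mxdirect_sumsP S_direct vS v0 i; apply/eqP; rewrite -submx0.
rewrite -(S_direct i isT) sub_capmx vS /=.
move: v0; rewrite (bigD1 i) //= => /eqP; rewrite addr_eq0 => /eqP ->.
by rewrite eqmx_opp; apply: summx_sub_sums => j _; apply: vS.
Qed.

Section GenericColumns.
Variables (K : numFieldType) (m n : nat) (W : 'M[K]_(m, n)) (S : 'M[K]_m).
Implicit Type C : {set 'I_n}.

Lemma drawn_sel_sub C : C \subset [set j | drawn_from W S j] -> (sel_mx C *m W^T <= S)%MS.
Proof.
move=> CS; apply/row_subP=> a; rewrite row_mul_sel_mx.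
case: ifP => [aC|_]; last exact: sub0mx.
by have := subsetP CS a aC; rewrite inE /drawn_from tr_col.
Qed.

Variable B : {set 'I_n}.
Hypothesis W_generic : generic_for W S B.

(* Complete min(|C|, dim S) elements of C by elements of B :\: C into a basis. *)
Lemma generic_rank_ge C :
  C \subset B -> (minn #|C| (\rank S) <= \rank (sel_mx C *m W^T))%N.
Proof.
move: W_generic => [B_gt basis] CB; set k := minn #|C| (\rank S).
have [C' C'C C'k] := subset_of_card (geq_minl #|C| (\rank S)).
have [|E EBC Ek] := @subset_of_card _ (B :\: C) (\rank S - k).
  by rewrite cardsDS //; have := subset_leq_card CB; rewrite /k; lia.
have C'E : [disjoint C' & E].
  by rewrite -setI_eq0 -subset0 (subset_trans (setISS C'C EBC)) // setDE setICA setICr setI0.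
have B'B : C' :|: E \subset B.
  by rewrite subUset (subset_trans C'C CB) (subset_trans EBC (subsetDl B C)).
have B'card : #|C' :|: E| = \rank S.
  by rewrite cardsU (disjoint_setI0 C'E) cards0 C'k Ek /k; lia.
have [free _] := basis _ B'B B'card.
have : (\rank S <= \rank (sel_mx C *m W^T) + \rank (sel_mx E *m W^T))%N.
  rewrite -B'card -(eqnP free) (eqmx_colset W).
  apply: leq_trans (mxrank_adds_leqif _ _); apply/mxrankS/submx_trans/sel_mxU_sub.
  exact/sel_mx_subset/setSU.
have : (\rank (sel_mx E *m W^T) <= #|E|)%N by rewrite -(eqmx_colset W) rank_leq_row.
rewrite Ek /k; lia.
Qed.

Lemma generic_col_neq0 j : (0 < \rank S)%N -> j \in B -> col j W != 0.
Proof.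
move=> S_gt0 jB; have := generic_rank_ge (_ : [set j] \subset B).
rewrite sub1set cards1 (minn_idPl S_gt0) => /(_ jB); apply: contraTneq => Wj0.
by rewrite sel_mx1_mul_eq0 ?mxrank0 // -tr_col Wj0 trmx0.
Qed.

End GenericColumns.

Section Clustering.
Variables (K : numFieldType) (cj : {rmorphism K -> K}).
Hypothesis cj_ge0 : forall x : K, 0 <= cj x * x.
Hypothesis cj_eq0 : forall x : K, cj x * x = 0 -> x = 0.
Variables (m n M : nat) (S : 'I_M -> 'M[K]_m) (W : 'M[K]_(m, n)) (X : 'M[K]_(n, m)).
Hypothesis S_gt0 : forall l, (0 < \rank (S l))%N.
Hypothesis S_direct : mxdirect (\sum_l S l).
Hypothesis W_cover : forall j, exists l, drawn_from W (S l) j.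
Hypothesis W_generic : forall l, generic_for W (S l) [set j | drawn_from W (S l) j].
Hypothesis W_pinv : is_pinv cj W X.

Let A l := [set j | drawn_from W (S l) j].

Lemma drawn_sets_disjoint j l l' : j \in A l -> j \in A l' -> l = l'.
Proof.
move=> jl jl'; apply/eqP; apply: contraTT (generic_col_neq0 (W_generic l) (S_gt0 l) jl).
move=> ll'; rewrite negbK -trmx_eq0 -submx0.
move/mxdirect_sumsP: S_direct => /(_ l isT) <-; rewrite sub_capmx.
by move: jl jl'; rewrite !inE /drawn_from => -> jl'; rewrite (sumsmx_sup l') // eq_sym ll'.
Qed.

Lemma sum_sel_drawn : \sum_l sel_mx (A l) = 1%:M :> 'M[K]_n.
Proof.
apply/matrixP=> a b; rewrite summxE.
under eq_bigr => l _ do rewrite -[sel_mx (A l)]mulmx1 mul_sel_mxE.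
have [l al] := W_cover a; have al' : a \in A l by rewrite inE.
rewrite (bigD1 l) //= al' big1 ?addr0 // => l' l'l; case: ifP => // al''.
by rewrite (drawn_sets_disjoint al'' al') eqxx in l'l.
Qed.

Lemma sel_drawn_ker p (c : 'M[K]_(n, p)) l : W *m c = 0 -> W *m sel_mx (A l) *m c = 0.
Proof.
move=> Wc0; apply: trmx_inj; rewrite trmx0.
apply: (mxdirect_sum_eq0 S_direct (v := fun l => (W *m sel_mx (A l) *m c)^T)) => [k|].
  by rewrite !trmx_mul tr_sel_mx (submx_trans (submxMl _ _)) // drawn_sel_sub.
by rewrite -raddf_sum -mulmx_suml -mulmx_sumr sum_sel_drawn mulmx1 Wc0 raddf0.
Qed.

Lemma drawn_set_closed l : support_closed (X *m W) (A l).
Proof.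
apply/commute_sel_closed/(pinv_commute W_pinv); first exact: adjmx_sel_mx.
by move=> c; apply: sel_drawn_ker.
Qed.

Variable Q : 'M[K]_n.
Hypothesis Q_ge0 : forall a b, 0 <= Q a b.
Hypothesis Q_supp : forall a b, (Q a b != 0) = ((X *m W) a b != 0).

Lemma exp_mx_supp_drawn l i j t :
  drawn_from W (S l) i -> (Q ^+ t) i j != 0 -> drawn_from W (S l) j.
Proof.
move=> il Qij; have iA : i \in A l by rewrite inE.
have /subsetP/(_ j) := reach_sub Q_ge0 t (support_closed_eq Q_supp (@drawn_set_closed l)) iA.
by rewrite !inE; apply.
Qed.

Lemma drawn_exp_mx_neq0 l i j t : drawn_from W (S l) i -> drawn_from W (S l) j ->
  (\rank (S l) <= t)%N -> (Q ^+ t) i j != 0.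
Proof.
move=> il jl St; have [_ XWX _ XW_herm] := W_pinv; have [S_lt _] := W_generic l.
have XW_idem : X *m W *m (X *m W) = X *m W by rewrite mulmxA XWX.
have rank_ge (C : {set 'I_n}) :
    C \subset A l -> (minn #|C| (\rank (S l)) <= \rank (sel_mx C *m (X *m W)))%N.
  by rewrite (pinv_rank_sel W_pinv); apply: generic_rank_ge.
have rank_le : (\rank (sel_mx (A l) *m (X *m W)) <= \rank (S l))%N.
  by rewrite (pinv_rank_sel W_pinv) mxrankS // drawn_sel_sub.
have iA : i \in A l by rewrite inE.
have := reach_block_eq cj_ge0 cj_eq0 XW_idem XW_herm Q_ge0 Q_supp (@drawn_set_closed l)
  rank_ge rank_le (S_gt0 l) S_lt iA St.
by move/setP/(_ j); rewrite !inE jl.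
Qed.

End Clustering.

Section SimilarityMatrix.
Variables (K : numFieldType) (cj : {rmorphism K -> K}).
Hypothesis cjK : involutive cj.
Hypothesis cj_ge0 : forall x : K, 0 <= cj x * x.
Hypothesis cj_eq0 : forall x : K, cj x * x = 0 -> x = 0.
Hypothesis cj_norm : forall x : K, `|cj x| = `|x|.

Lemma bin_abs_support n (P Q : 'M[K]_n) :
  (forall a b, P b a = cj (P a b)) -> Q = binmx P \/ Q = absmx P ->
  [/\ forall a b, 0 <= Q a b, forall a b, (Q a b != 0) = (P a b != 0) & Q^T = Q].
Proof.
move=> P_conj [->|->]; split=> [a b|a b|]; rewrite ?mxE.
- exact: ler0n.
- by rewrite pnatr_eq0 eqb0 negbK.
- by apply/matrixP=> a b; rewrite !mxE P_conj fmorph_eq0.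
- exact: normr_ge0.
- by rewrite normr_eq0.
- by apply/matrixP=> a b; rewrite !mxE P_conj cj_norm.
Qed.

Theorem corollary4_conj : corollary4_prop cj.
Proof.
move=> m n M r S W X S_gt0 S_indep _ W_cover W_generic W_pinv.
split=> [Q Q_def|U sigma V]; last exact: pinv_skinny_svd.
have [_ _ _ XW_herm] := W_pinv.
have [Q_ge0 Q_supp Q_sym] := bin_abs_support (proj_conj XW_herm) Q_def.
have S_direct : mxdirect (\sum_l S l) by rewrite mxdirectE /= S_indep.
split=> [|i j]; first exact: tr_exp_mx.
split=> [Qij|[l [il jl]]].
- have [l il] := W_cover i; exists l; split=> //.
  by apply: (exp_mx_supp_drawn S_gt0 S_direct W_cover W_generic W_pinv Q_ge0 Q_supp il Qij).
- apply: (drawn_exp_mx_neq0 cj_ge0 cj_eq0 S_gt0 S_direct W_cover W_generic W_pinv Q_ge0 Q_supp)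
    il jl _.
  exact: leq_bigmax.
Qed.

End SimilarityMatrix.

Theorem corollary4 (R : realType) :
  corollary4_prop (K := R) id /\
  corollary4_prop (K := R[i]) (fun z => z^*).
Proof.
split.
- apply: (@corollary4_conj R idfun) => // x.
  + by rewrite sqr_ge0.
  + by move/eqP; rewrite mulf_eq0 orbb => /eqP.
- apply: (@corollary4_conj R[i] Num.conj) => [|x|x|x]; first exact: conjCK.
  + by rewrite mulrC -normCK exprn_ge0.
  + by rewrite mulrC -normCK => /eqP; rewrite expf_eq0 /= normr_eq0 => /eqP.
  + exact: norm_conjC.
Qed.
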